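(* Let $\alpha<\tfrac12$. For every $k\in\mathbb N$ and every $\varepsilon>0$, $\widetilde\varphi_k(x)=O(x^\varepsilon)$ as $x\to\infty$.
   Context: $\mathrm m(x):=x^{1-4\alpha}e^{-1/(2x^2)}$ for $x>0$. The canonical $*$-moment functions are defined recursively by $\widetilde\varphi_{-1}:\equiv0$, $\widetilde\varphi_0:\equiv1$ and, for $k\in\mathbb N$ and $x\ge0$, $$\widetilde\varphi_k(x):=4k\int_0^x\frac1{y^2\mathrm m(y)}\int_0^y\mathrm m(\xi)\bigl[(1-2\alpha)\widetilde\varphi_{k-1}(\xi)+(k-1)\widetilde\varphi_{k-2}(\xi)\bigr]d\xi\,dy.$$ *)

From Stdlib Require Import Reals ClassicalEpsilon.
Open Scope R_scope.

(* Total Riemann integral: RiemannInt when f is Riemann integrable on [a,b],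
   0 otherwise (RiemannInt does not depend on the integrability proof). *)
Definition Rint (f : R -> R) (a b : R) : R :=
  match excluded_middle_informative (exists p : Riemann_integrable f a b, True) with
  | left H => RiemannInt (proj1_sig (constructive_indefinite_description _ H))
  | right _ => 0
  end.

Definition mfun (alpha x : R) : R :=
  Rpower x (1 - 4 * alpha) * exp (- / (2 * x ^ 2)).

(* phi_pair alpha k = (phi_{k-1}, phi_k) *)
Fixpoint phi_pair (alpha : R) (k : nat) : (R -> R) * (R -> R) :=
  match k with
  | O => (fun _ => 0, fun _ => 1)
  | S j =>
      let (p, q) := phi_pair alpha j in
      (q, fun x => 4 * INR (S j) *
            Rint (fun y => / (y ^ 2 * mfun alpha y) *
                    Rint (fun xi => mfun alpha xi *
                            ((1 - 2 * alpha) * q xi + INR j * p xi)) 0 y) 0 x)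
  end.

Definition phi (alpha : R) (k : nat) : R -> R := snd (phi_pair alpha k).

(** Write [m(t) = t^b e^{-1/(2t^2)}] with [b = 1 - 4 alpha > -1].  Comparing with
    the antiderivatives of [t^(b+3) e^{-1/(2t^2)}] near [0] and of
    [t^(b+1) e^{-1/(2t^2)}] near infinity gives
    [|int_0^y m h| <= K sup|h| y^2 m(y) / (1 + y)].  Hence if [phi_(k-1)] and
    [phi_(k-2)] are [O((1+t)^d)], the outer integrand of [phi_k] is
    [O((1+y)^(d-1))], so [phi_k] is again [O((1+x)^d)]. *)

From Stdlib Require Import Reals Lra ClassicalEpsilon.
From Coquelicot Require Import Coquelicot.
Open Scope R_scope.

(** The comparison only needs [G' = g] on [(0, y]]: the integral over [(0, a)]
    is at most [a] times a bound of [f], and [a] can be taken arbitrarily small. *)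
Lemma Rint_abs_le_antiderivative (f G g : R -> R) (y : R) : 0 < y ->
  (forall t, 0 < t <= y -> is_derive G t (g t)) ->
  (forall t, 0 < t <= y -> continuous g t) ->
  (forall t, 0 < t <= y -> 0 <= G t) ->
  (forall t, 0 < t < y -> Rabs (f t) <= g t) ->
  Rabs (Rint f 0 y) <= G y.
Proof.
  intros Hy HG Hg HG0 Hf.
  unfold Rint. destruct excluded_middle_informative as [H|H].
  2:{ rewrite Rabs_R0. apply HG0; lra. }
  set (pr := proj1_sig _).
  rewrite <- RInt_Reals.
  assert (Hex : ex_RInt f 0 y) by (apply ex_RInt_Reals_1; exact pr).
  destruct (ex_RInt_ub f 0 y Hex) as [M HM].
  rewrite Rmin_left, Rmax_right in HM by lra.
  assert (HM0 : 0 <= M) by (apply Rle_trans with (norm (f 0)); [apply norm_ge_0 | apply HM; lra]).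
  assert (split_bound : forall a, 0 < a < y -> Rabs (RInt f 0 y) <= a * M + G y).
  { intros a Ha.
    assert (E1 : ex_RInt f 0 a) by (apply (ex_RInt_Chasles_1 f 0 a y); [lra | exact Hex]).
    assert (E2 : ex_RInt f a y) by (apply (ex_RInt_Chasles_2 f 0 a y); [lra | exact Hex]).
    rewrite <- (RInt_Chasles f 0 a y E1 E2).
    assert (Hg' : is_RInt g a y (minus (G y) (G a))).
    { apply (is_RInt_derive G g a y); intros t Ht;
        rewrite Rmin_left, Rmax_right in Ht by lra; [apply HG | apply Hg]; lra. }
    assert (near0 : Rabs (RInt f 0 a) <= (a - 0) * M).
    { apply abs_RInt_le_const; try lra; auto. intros t Ht. apply HM; lra. }
    assert (away0 : Rabs (RInt f a y) <= G y - G a).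
    { eapply Rle_trans; [apply abs_RInt_le; [lra | exact E2] |].
      replace (G y - G a) with (RInt g a y) by exact (is_RInt_unique g a y _ Hg').
      apply RInt_le; [lra | apply ex_RInt_norm, E2 | eexists; exact Hg' |].
      intros t Ht. apply Hf; lra. }
    assert (0 <= G a) by (apply HG0; lra).
    eapply Rle_trans; [apply Rabs_triang |]. unfold plus; simpl. lra. }
  apply Rle_plus_epsilon. intros e He.
  set (a := Rmin (y / 2) (e / (M + 1))).
  assert (Ha0 : 0 < a) by (apply Rmin_case; [lra | apply Rdiv_lt_0_compat; lra]).
  assert (HaM : a * M <= e).
  { apply Rle_trans with (e / (M + 1) * (M + 1)).
    - apply Rmult_le_compat; [lra | lra | apply Rmin_r | lra].
    - right. field. lra. }
  assert (Hay : a < y) by (apply Rle_lt_trans with (y / 2); [apply Rmin_l | lra]).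
  pose proof (split_bound a (conj Ha0 Hay)). lra.
Qed.

Definition mweight (c t : R) : R := exp (c * ln t - / (2 * t ^ 2)).

Definition mweight_deriv (c t : R) : R := mweight c t * (c / t + / t ^ 3).

Lemma mweight_pos c t : 0 < mweight c t.
Proof. apply exp_pos. Qed.

Lemma mfun_mweight alpha t : 0 < t -> mfun alpha t = mweight (1 - 4 * alpha) t.
Proof. intros Ht. unfold mfun, mweight, Rpower. rewrite <- exp_plus. f_equal. Qed.

Lemma mweight_shift c n t : 0 < t -> mweight (c + INR n) t = mweight c t * t ^ n.
Proof.
  intros Ht. unfold mweight. rewrite <- (Rpower_pow n t Ht). unfold Rpower.
  rewrite <- exp_plus. f_equal. ring.
Qed.

Lemma is_derive_mweight c t : 0 < t -> is_derive (mweight c) t (mweight_deriv c t).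
Proof.
  intros Ht. unfold mweight_deriv, mweight. auto_derive.
  - repeat split; try lra; nra.
  - replace (c * ln t + - / (2 * (t * (t * 1)))) with (c * ln t - / (2 * t ^ 2))
      by (simpl; ring).
    field. lra.
Qed.

Lemma continuous_scal_mweight_deriv L c t : 0 < t ->
  continuous (fun s => L * mweight_deriv c s) t.
Proof.
  intros Ht. apply (ex_derive_continuous (K := R_AbsRing) (V := R_NormedModule)).
  unfold mweight_deriv, mweight. auto_derive.
  repeat split; try lra; try nra; apply Rgt_not_eq; apply Rmult_lt_0_compat; nra.
Qed.

Lemma Rint_abs_le_mweight (f : R -> R) (b c H L y : R) : 0 < y -> 0 <= H -> 0 < L ->
  (forall t, 0 < t < y -> Rabs (f t) <= H * mweight b t) ->
  (forall t, 0 < t < y -> L * mweight b t <= mweight_deriv c t) ->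
  Rabs (Rint f 0 y) <= H / L * mweight c y.
Proof.
  intros Hy HH HL Hf Hc.
  apply Rint_abs_le_antiderivative
    with (G := fun t => H / L * mweight c t) (g := fun t => H / L * mweight_deriv c t).
  - exact Hy.
  - intros t Ht. apply is_derive_scal, is_derive_mweight. lra.
  - intros t Ht. apply continuous_scal_mweight_deriv. lra.
  - intros t Ht. apply Rmult_le_pos; [apply Rdiv_le_0_compat; lra | left; apply mweight_pos].
  - intros t Ht. apply Rle_trans with (H / L * (L * mweight b t)).
    + replace (H / L * (L * mweight b t)) with (H * mweight b t) by (field; lra). auto.
    + apply Rmult_le_compat_l; [apply Rdiv_le_0_compat; lra | auto].
Qed.

Lemma mweight_le_deriv_shift3 b t : 0 < t -> 0 <= b + 3 ->
  mweight b t <= mweight_deriv (b + 3) t.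
Proof.
  intros Ht Hb. unfold mweight_deriv.
  replace (b + 3) with (b + INR 3) at 1 by (simpl; ring).
  rewrite mweight_shift by lra.
  replace (mweight b t * t ^ 3 * ((b + 3) / t + / t ^ 3))
    with (mweight b t * ((b + 3) * t ^ 2 + 1)) by (field; lra).
  pose proof (mweight_pos b t). assert (0 <= (b + 3) * t ^ 2) by nra. nra.
Qed.

Lemma mweight_le_deriv_shift1 b t : 0 < t -> 0 < 1 + b ->
  (1 + b) * mweight b t <= mweight_deriv (b + 1) t.
Proof.
  intros Ht Hb. unfold mweight_deriv.
  replace (b + 1) with (b + INR 1) at 1 by (simpl; ring).
  rewrite mweight_shift by lra.
  replace (mweight b t * t ^ 1 * ((b + 1) / t + / t ^ 3))
    with (mweight b t * ((1 + b) + / t ^ 2)) by (field; lra).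
  rewrite Rmult_comm. apply Rmult_le_compat_l; [left; apply mweight_pos |].
  assert (0 < / t ^ 2) by (apply Rinv_0_lt_compat, pow_lt; lra). lra.
Qed.

(** The shift by [t^3] is sharp near [0] and the shift by [t] near infinity. *)
Lemma Rint_mfun_abs_le alpha (h : R -> R) (H y : R) : alpha < 1 / 2 -> 0 < y -> 0 <= H ->
  (forall t, 0 < t < y -> Rabs (h t) <= H) ->
  Rabs (Rint (fun xi => mfun alpha xi * h xi) 0 y) <=
    H * (2 + 2 / (2 - 4 * alpha)) / (1 + y) * (y ^ 2 * mfun alpha y).
Proof.
  intros Ha Hy HH Hh.
  set (b := 1 - 4 * alpha).
  replace (2 - 4 * alpha) with (1 + b) by (unfold b; ring).
  assert (Hb : 0 < 1 + b) by (unfold b; lra).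
  assert (Hf : forall t, 0 < t < y -> Rabs (mfun alpha t * h t) <= H * mweight b t).
  { intros t Ht. rewrite Rabs_mult, mfun_mweight, Rabs_pos_eq by (lra || left; apply mweight_pos).
    rewrite Rmult_comm. apply Rmult_le_compat_r; [left; apply mweight_pos | auto]. }
  rewrite mfun_mweight by lra. fold b.
  assert (Hw : 0 < mweight b y) by apply mweight_pos.
  assert (HK : 0 < 2 / (1 + b)) by (apply Rdiv_lt_0_compat; lra).
  destruct (Rle_dec y 1) as [Hy1 | Hy1].
  - eapply Rle_trans.
    { apply (Rint_abs_le_mweight _ b (b + 3) H 1); auto; try lra.
      intros t Ht. rewrite Rmult_1_l. apply mweight_le_deriv_shift3; lra. }
    replace (b + 3) with (b + INR 3) by (simpl; ring).
    rewrite mweight_shift by lra.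
    replace (H / 1 * (mweight b y * y ^ 3))
      with (H * mweight b y * y ^ 2 * (y * (1 + y)) / (1 + y)) by (field; lra).
    replace (H * (2 + 2 / (1 + b)) / (1 + y) * (y ^ 2 * mweight b y))
      with (H * mweight b y * y ^ 2 * (2 + 2 / (1 + b)) / (1 + y)) by (field; lra).
    apply Rmult_le_compat_r; [left; apply Rinv_0_lt_compat; lra |].
    apply Rmult_le_compat_l; [apply Rmult_le_pos; [apply Rmult_le_pos |]; nra | nra].
  - eapply Rle_trans.
    { apply (Rint_abs_le_mweight _ b (b + 1) H (1 + b)); auto.
      intros t Ht. apply mweight_le_deriv_shift1; lra. }
    replace (b + 1) with (b + INR 1) by (simpl; ring).
    rewrite mweight_shift by lra.
    replace (H / (1 + b) * (mweight b y * y ^ 1))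
      with (H * mweight b y * y * ((1 + y) / (1 + b)) / (1 + y)) by (field; lra).
    replace (H * (2 + 2 / (1 + b)) / (1 + y) * (y ^ 2 * mweight b y))
      with (H * mweight b y * y * (y * (2 + 2 / (1 + b))) / (1 + y)) by (field; lra).
    apply Rmult_le_compat_r; [left; apply Rinv_0_lt_compat; lra |].
    apply Rmult_le_compat_l; [apply Rmult_le_pos; [apply Rmult_le_pos |]; lra |].
    replace ((1 + y) / (1 + b)) with ((1 + y) * (/ (1 + b))) by reflexivity.
    replace (y * (2 + 2 / (1 + b))) with (2 * y + 2 * y * / (1 + b)) by (field; lra).
    assert (0 < / (1 + b)) by (apply Rinv_0_lt_compat; lra). nra.
Qed.

Lemma Rint_abs_le_Rpower (g : R -> R) (B d x : R) : 0 < x -> 0 < d -> 0 <= B ->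
  (forall y, 0 < y < x -> Rabs (g y) <= B * Rpower (1 + y) d / (1 + y)) ->
  Rabs (Rint g 0 x) <= B / d * Rpower (1 + x) d.
Proof.
  intros Hx Hd HB Hg.
  apply Rint_abs_le_antiderivative
    with (G := fun t => B / d * exp (d * ln (1 + t)))
         (g := fun t => B / d * (exp (d * ln (1 + t)) * (d / (1 + t)))).
  - exact Hx.
  - intros t Ht. apply is_derive_scal. auto_derive; [lra | field; lra].
  - intros t Ht. apply (ex_derive_continuous (K := R_AbsRing) (V := R_NormedModule)).
    auto_derive. repeat split; lra.
  - intros t Ht. apply Rmult_le_pos; [apply Rdiv_le_0_compat; lra | left; apply exp_pos].
  - intros y Hy. eapply Rle_trans; [apply Hg; exact Hy |].
    right. unfold Rpower. field. lra.
Qed.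

Lemma Rint_phi_step_abs_le alpha (h : R -> R) (D d x : R) :
  alpha < 1 / 2 -> 0 < d -> 0 <= D -> 0 < x ->
  (forall t, 0 < t -> Rabs (h t) <= D * Rpower (1 + t) d) ->
  Rabs (Rint (fun y => / (y ^ 2 * mfun alpha y) *
                       Rint (fun xi => mfun alpha xi * h xi) 0 y) 0 x) <=
    D * (2 + 2 / (2 - 4 * alpha)) / d * Rpower (1 + x) d.
Proof.
  intros Ha Hd HD Hx Hh.
  set (K := 2 + 2 / (2 - 4 * alpha)).
  assert (HK : 0 <= K) by (assert (0 < 2 / (2 - 4 * alpha)) by (apply Rdiv_lt_0_compat; lra);
                           unfold K; lra).
  apply Rint_abs_le_Rpower; [exact Hx | exact Hd | apply Rmult_le_pos; lra |].
  intros y Hy.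
  assert (Hpow : 0 < Rpower (1 + y) d) by apply exp_pos.
  assert (Hh_y : forall t, 0 < t < y -> Rabs (h t) <= D * Rpower (1 + y) d).
  { intros t Ht. eapply Rle_trans; [apply Hh; lra |].
    apply Rmult_le_compat_l; [lra | apply Rle_Rpower_l; lra]. }
  assert (HDy : 0 <= D * Rpower (1 + y) d) by (apply Rmult_le_pos; lra).
  pose proof (Rint_mfun_abs_le alpha h _ y Ha (proj1 Hy) HDy Hh_y) as Hinner.
  fold K in Hinner.
  assert (Hmy : 0 < mfun alpha y) by (rewrite mfun_mweight by lra; apply mweight_pos).
  assert (Hm : 0 < y ^ 2 * mfun alpha y) by (apply Rmult_lt_0_compat; [apply pow_lt |]; lra).
  rewrite Rabs_mult, (Rabs_pos_eq (/ _)) by (left; apply Rinv_0_lt_compat; lra).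
  eapply Rle_trans; [apply Rmult_le_compat_l; [left; apply Rinv_0_lt_compat; lra | exact Hinner] |].
  right. field. repeat split; lra.
Qed.

Lemma phi_pair_growth alpha d : alpha < 1 / 2 -> 0 < d -> forall k, exists A, 0 <= A /\
  forall t, 0 < t -> Rabs (fst (phi_pair alpha k) t) <= A * Rpower (1 + t) d /\
                     Rabs (snd (phi_pair alpha k) t) <= A * Rpower (1 + t) d.
Proof.
  intros Ha Hd. induction k as [|j IH].
  - exists 1. split; [lra |]. intros t Ht. simpl. rewrite Rabs_R0, Rabs_R1.
    assert (1 <= Rpower (1 + t) d).
    { rewrite <- (Rpower_O (1 + t)) at 1 by lra. apply Rle_Rpower; lra. }
    lra.
  - destruct IH as [A [HA IH]].
    cbn [phi_pair]. destruct (phi_pair alpha j) as [p q]. cbn [fst snd] in IH |- *.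
    set (D := (Rabs (1 - 2 * alpha) + INR j) * A).
    assert (HD : 0 <= D).
    { pose proof (pos_INR j). pose proof (Rabs_pos (1 - 2 * alpha)).
      apply Rmult_le_pos; lra. }
    assert (Hh : forall t, 0 < t ->
              Rabs ((1 - 2 * alpha) * q t + INR j * p t) <= D * Rpower (1 + t) d).
    { intros t Ht. destruct (IH t Ht) as [Hp Hq].
      eapply Rle_trans; [apply Rabs_triang |].
      rewrite !Rabs_mult, (Rabs_pos_eq (INR j)) by apply pos_INR.
      pose proof (pos_INR j). pose proof (Rabs_pos (1 - 2 * alpha)).
      unfold D. rewrite Rmult_assoc, Rmult_plus_distr_r.
      apply Rplus_le_compat; apply Rmult_le_compat_l; lra. }
    set (B := 4 * INR (S j) * (D * (2 + 2 / (2 - 4 * alpha)) / d)).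
    exists (Rmax A B). split; [apply Rle_trans with A; [exact HA | apply Rmax_l] |].
    intros x Hx.
    assert (Hpow : 0 < Rpower (1 + x) d) by apply exp_pos.
    split.
    + eapply Rle_trans; [apply (IH x Hx) |].
      apply Rmult_le_compat_r; [lra | apply Rmax_l].
    + eapply Rle_trans; [| apply Rmult_le_compat_r; [lra | apply Rmax_r]].
      pose proof (pos_INR (S j)).
      rewrite Rabs_mult, (Rabs_pos_eq (4 * INR (S j))) by lra.
      unfold B. rewrite (Rmult_assoc (4 * INR (S j)) (D * _ / d)).
      apply Rmult_le_compat_l; [lra |].
      exact (Rint_phi_step_abs_le alpha _ D d x Ha Hd HD Hx Hh).
Qed.

Theorem mainTheorem19 (alpha : R) (halpha : alpha < 1 / 2) (k : nat) (eps : R) (heps : 0 < eps) :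
  exists C M : R, 0 < M /\ forall x : R, M <= x -> Rabs (phi alpha k x) <= C * Rpower x eps.
Proof.
  destruct (phi_pair_growth alpha eps halpha heps k) as [A [HA Hgrowth]].
  exists (A * Rpower 2 eps), 1. split; [lra |].
  intros x Hx. unfold phi.
  eapply Rle_trans; [apply (Hgrowth x ltac:(lra)) |].
  rewrite Rmult_assoc, Rpower_mult_distr by lra.
  apply Rmult_le_compat_l; [exact HA | apply Rle_Rpower_l; lra].
Qed.
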